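(* Let $(w_i)_{i\in[n]}$ be positive weights, $W_n=w_I$ with $I$ uniform on $[n]$, and consider the measure on $\{-1,1\}^n$ $$\mu_n(\sigma)=\frac{1}{Z_n}\exp\Big(\frac{\beta}{2n\mathbb E[W_n]}\Big(\sum_{i}w_i\sigma_i\Big)^2+h\sum_i\sigma_i\Big).$$ Define $$G_n(x;s)=\frac{x^2}{2}-\mathbb E\Big[\log\cosh\Big(\sqrt{\tfrac{\beta}{\mathbb E[W_n]}}W_n(x+s)+h\Big)\Big],\qquad G_n(x)=G_n(x;0).$$ Let $x_n^*$ be the solution with the same sign as $h$ (with $x_n^*=0$ when $h=0$) of $x=\mathbb E\big[\tanh\big(\sqrt{\beta/\mathbb E[W_n]}W_nx+h\big)\sqrt{\beta/\mathbb E[W_n]}W_n\big]$, write $T_n=\tanh(\sqrt{\beta/\mathbb E[W_n]}W_nx_n^*+h)$ and set $$M_n=\mathbb E[T_n],\quad \sigma^2=\frac{1}{G_n''(x_n^* )},\quad \chi_n=1-\mathbb E[T_n^2]+\frac{\frac{\beta}{\mathbb E[W_n]}\mathbb E[(1-T_n^2)W_n]^2}{1-\frac{\beta}{\mathbb E[W_n]}\mathbb E[(1-T_n^2)W_n^2]},$$ $$\tilde M_n=\sqrt{\tfrac{\mathbb E[W_n]}{\beta}}x_n^*,\qquad \tilde\chi_n=\sigma^2\,\mathbb E[(1-T_n^2)W_n^2].$$ Let $\sigma\sim\mu_n$, $m_n=\frac1n\sum_i\sigma_i$, $\tilde m_n=\frac1n\sum_iw_i\sigma_i$, $\tilde m_n^i=\frac1n\sum_{j\neq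 i}w_j\sigma_j$, and $$X_n=\sqrt n\frac{m_n-M_n}{\sqrt{\chi_n}},\qquad \tilde X_n=\sqrt n\frac{\tilde m_n-\tilde M_n}{\sqrt{\tilde\chi_n}}.$$ Let $I$ be uniform on $[n]$ independent of $\sigma$, let $\sigma_I'$ be drawn from the conditional distribution (under $\mu_n$) of $\sigma_I$ given $(\sigma_j)_{j\neq I}$, and set $$X_n'=X_n-\frac{\sigma_I-\sigma_I'}{\sqrt n\sqrt{\chi_n}},\qquad \tilde X_n'=\tilde X_n-\frac{w_I(\sigma_I-\sigma_I')}{\sqrt n\sqrt{\tilde\chi_n}}.$$ Let $\mathcal F_n$ be the $\sigma$-algebra generated by $(\sigma_i)_{i\in[n]}$. Let $\lambda=1/n$, $$c=\frac{\sqrt{\tilde\chi_n}}{\sqrt{\chi_n}}\frac{\beta}{\mathbb E[W_n]}\mathbb E[(1-T_n^2)W_n],$$ and $$R_1=\frac{\sqrt n}{\sqrt{\chi_n}}\frac1n\sum_{i}\Big(\tanh\big(\tfrac{\beta w_i}{\mathbb E[W_n]}\tilde m_n+h\big)-\tanh\big(\tfrac{\beta w_i}{\mathbb E[W_n]}\tilde m_n^i+h\big)\Big),$$ $$R_2=\frac{\sqrt n}{\sqrt{\chi_n}}\frac1n\sum_i\Big(\tanh\big(\sqrt{\tfrac{\beta}{\mathbb E[W_n]}}w_ix_n^*+h\big)-\tanh\big(\tfrac{\beta w_i}{\mathbb E[W_n]}\tilde m_n+h\big)\Big)+c\tilde X_n,$$ $$\tilde R_1=\frac{\sqrt n}{\sqrt{\tilde\chi_n}}\frac1n\sum_iw_i\Big(\tanh\big(\tfrac{\beta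 w_i}{\mathbb E[W_n]}\tilde m_n+h\big)-\tanh\big(\tfrac{\beta w_i}{\mathbb E[W_n]}\tilde m_n^i+h\big)\Big),$$ $$\tilde R_2=\frac{\sqrt n}{\sqrt{\tilde\chi_n}}\sqrt{\tfrac{\mathbb E[W_n]}{\beta}}\,G_n'\Big(\sqrt{\tfrac{\beta}{\mathbb E[W_n]}}\tilde m_n\Big)-\frac{1}{\sigma^2}\tilde X_n.$$ Then, for $(\beta,h)\in\mathcal U=\{(\beta,h):\beta\ge0,h\ne0\}\cup\{(\beta,0):0<\beta<\beta_c\}$ (where $\beta_c=\mathbb E[W]/\mathbb E[W^2]$), $$\mathbb E\left[\begin{pmatrix}X_n-X_n'\\ \tilde X_n-\tilde X_n'\end{pmatrix}\,\Big|\,\mathcal F_n\right]=\lambda\begin{pmatrix}1&-c\\0&1/\sigma^2\end{pmatrix}\begin{pmatrix}X_n\\ \tilde X_n\end{pmatrix}+\lambda\begin{pmatrix}R_1+R_2\\ \tilde R_1+\tilde R_2\end{pmatrix}.$$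
   Context: $\mathbb E[f(W_n)]$ means $\frac1n\sum_if(w_i)$. $W$ is the distributional limit of $W_n$ from the weight regularity assumptions ($W_n\to W$ in distribution, $\mathbb E[W_n^2]\to\mathbb E[W^2]<\infty$, $\mathbb E[W]>0$), used only to define $\beta_c$ and the regime $\mathcal U$. *)

From HB Require Import structures.
From mathcomp Require Import all_boot all_order all_algebra.
From mathcomp Require Import all_classical all_reals all_analysis.
Set Implicit Arguments. Unset Strict Implicit. Unset Printing Implicit Defensive.
Import Order.TTheory GRing.Theory Num.Theory.
Import numFieldNormedType.Exports.
Local Open Scope ring_scope.
Local Open Scope classical_set_scope.

Section CurieWeiss.
Variable R : realType.

Definition cosh (x : R) : R := (expR x + expR (- x)) / 2.
Definition tanh (x : R) : R := (expR x - expR (- x)) / (expR x + expR (- x)).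

Variable n : nat.
Variable w : 'I_n -> R.

Definition EWn (f : R -> R) : R := (\sum_(i < n) f (w i)) / n%:R.
Definition EW : R := EWn id.

(* spin configurations sigma in {-1,1}^n, encoded by booleans *)
Definition config := {ffun 'I_n -> bool}.
Definition spin (b : bool) : R := if b then 1 else -1.

Variables beta h : R.

Definition hamil (s : config) : R :=
  beta / (2 * n%:R * EW) * (\sum_(i < n) w i * spin (s i)) ^+ 2
  + h * \sum_(i < n) spin (s i).

Definition Zn : R := \sum_(s : config) expR (hamil s).
Definition mun (s : config) : R := expR (hamil s) / Zn.

Definition setspin (s : config) (i : 'I_n) (b : bool) : config :=
  [ffun j => if j == i then b else s j].

(* conditional law under mu_n of sigma_i given (sigma_j)_{j<>i} *)
Definition condspin (s : config) (i : 'I_n) (b : bool) : R :=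
  mun (setspin s i b) / (mun (setspin s i true) + mun (setspin s i false)).

(* joint law of (sigma, I, sigma'_I): sigma ~ mu_n, I uniform independent,
   sigma'_I drawn from the conditional law of sigma_I given the others *)
Definition jointlaw (s : config) (i : 'I_n) (b : bool) : R :=
  mun s * (1 / n%:R) * condspin s i b.

(* conditional expectation given F_n = sigma(sigma_1..sigma_n), evaluated at
   the atom {sigma = s}, of a random variable F(sigma, I, sigma'_I) *)
Definition condexpF (F : config -> 'I_n -> bool -> R) (s : config) : R :=
  (\sum_(i < n) \sum_(b : bool) jointlaw s i b * F s i b)
  / (\sum_(i < n) \sum_(b : bool) jointlaw s i b).

Definition mag (s : config) : R := (\sum_(i < n) spin (s i)) / n%:R.
Definition wmag (s : config) : R := (\sum_(i < n) w i * spin (s i)) / n%:R.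
Definition wmag_i (s : config) (i : 'I_n) : R :=
  (\sum_(j < n | j != i) w j * spin (s j)) / n%:R.

Definition kappa : R := Num.sqrt (beta / EW).

Definition Gns (x s : R) : R :=
  x ^+ 2 / 2 - EWn (fun y => ln (cosh (kappa * y * (x + s) + h))).
Definition Gn (x : R) : R := Gns x 0.

Variable xs : R.

Definition Tn (y : R) : R := tanh (kappa * y * xs + h).
Definition Mn : R := EWn Tn.
Definition sigma2 : R := 1 / (derive1n 2 Gn xs).
Definition chin : R :=
  1 - EWn (fun y => Tn y ^+ 2)
  + (beta / EW) * (EWn (fun y => (1 - Tn y ^+ 2) * y)) ^+ 2
    / (1 - (beta / EW) * EWn (fun y => (1 - Tn y ^+ 2) * y ^+ 2)).
Definition tMn : R := Num.sqrt (EW / beta) * xs.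
Definition tchin : R := sigma2 * EWn (fun y => (1 - Tn y ^+ 2) * y ^+ 2).

Definition Xn (s : config) : R :=
  Num.sqrt n%:R * (mag s - Mn) / Num.sqrt chin.
Definition tXn (s : config) : R :=
  Num.sqrt n%:R * (wmag s - tMn) / Num.sqrt tchin.
Definition Xn' (s : config) (i : 'I_n) (b : bool) : R :=
  Xn s - (spin (s i) - spin b) / (Num.sqrt n%:R * Num.sqrt chin).
Definition tXn' (s : config) (i : 'I_n) (b : bool) : R :=
  tXn s - w i * (spin (s i) - spin b) / (Num.sqrt n%:R * Num.sqrt tchin).

Definition lambda : R := 1 / n%:R.
Definition cc : R :=
  Num.sqrt tchin / Num.sqrt chin * (beta / EW) * EWn (fun y => (1 - Tn y ^+ 2) * y).

Definition R1 (s : config) : R :=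
  Num.sqrt n%:R / Num.sqrt chin *
  ((\sum_(i < n) (tanh (beta * w i / EW * wmag s + h)
                 - tanh (beta * w i / EW * wmag_i s i + h))) / n%:R).
Definition R2 (s : config) : R :=
  Num.sqrt n%:R / Num.sqrt chin *
  ((\sum_(i < n) (tanh (kappa * w i * xs + h)
                 - tanh (beta * w i / EW * wmag s + h))) / n%:R)
  + cc * tXn s.
Definition tR1 (s : config) : R :=
  Num.sqrt n%:R / Num.sqrt tchin *
  ((\sum_(i < n) w i * (tanh (beta * w i / EW * wmag s + h)
                 - tanh (beta * w i / EW * wmag_i s i + h))) / n%:R).
Definition tR2 (s : config) : R :=
  Num.sqrt n%:R / Num.sqrt tchin * Num.sqrt (EW / beta)
    * (derive1 Gn (kappa * wmag s))
  - 1 / sigma2 * tXn s.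

End CurieWeiss.

(* the limit W, given by its law muW on R *)
Section Limit.
Variable R : realType.
Variable muW : probability (measurableTypeR R) R.

Local Open Scope ereal_scope.
Definition EW_lim : R := fine (\int[muW]_x (x%:E)).
Definition EW2_lim : R := fine (\int[muW]_x ((x ^+ 2)%R%:E)).
Local Close Scope ereal_scope.

Definition beta_c : R := EW_lim / EW2_lim.

Definition regimeU (beta h : R) : Prop :=
  (0 <= beta /\ h != 0) \/ (h = 0 /\ 0 < beta /\ beta < beta_c).

Definition weight_regular (w : forall n : nat, 'I_n -> R) : Prop :=
  (forall n (i : 'I_n), 0 < w n i) /\
  (* W_n -> W in distribution *)
  (forall f : R -> R, continuous f -> (exists M : R, forall x, `|f x| <= M) ->
     ((fun n => (EWn (w n) f)%:E) @ \oo --> (\int[muW]_x (f x)%:E)%E)) /\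
  ((fun n => (EWn (w n) (fun y => y ^+ 2))%:E) @ \oo
     --> (\int[muW]_x ((x ^+ 2)%:E))%E) /\
  (\int[muW]_x ((x ^+ 2)%:E) < +oo)%E /\
  (0 < \int[muW]_x (x%:E))%E.

End Limit.

From Pilot Require Import Defs.
From HB Require Import structures.
From mathcomp Require Import all_boot all_order all_algebra.
From mathcomp Require Import all_classical all_reals all_analysis.
From mathcomp Require Import ring lra.
Set Implicit Arguments. Unset Strict Implicit. Unset Printing Implicit Defensive.
Import Order.TTheory GRing.Theory Num.Theory.
Local Open Scope ring_scope.

(* The conditional law of sigma_i given the other spins depends on them only
   through the local field
     u_i = beta w_i m~_n^i / E[W_n] + h,
   because the Hamiltonian is affine in sigma_i with slope u_i.  Hence
   E[sigma_I' | F_n, I = i] = tanh u_i, and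
     E[X_n - X_n' | F_n] = n^(-3/2) chi_n^(-1/2) sum_i (sigma_i - tanh u_i).
   Likewise for X~_n, with weights w_i.  What is left is rearranging sums,
   using G_n'(x) = x - E[tanh(kappa W_n x + h) kappa W_n] and
   kappa sqrt(E[W_n]/beta) = 1.  That last identity needs beta > 0, which
   holds in U: for beta = 0 the fixed-point equation forces x_n^* = 0, and
   this contradicts the sign condition when h <> 0. *)

Section Hyperbolic.
Variable R : realType.

Lemma cosh_gt0 (x : R) : 0 < cosh x.
Proof. by rewrite divr_gt0 // addr_gt0 // expR_gt0. Qed.

Lemma is_derive_cosh (x : R) : is_derive x 1 (@cosh R) ((expR x - expR (- x)) / 2).
Proof.
have dN : is_derive x 1 (expR \o -%R) (expR (- x) * -1).
  by apply: is_derive1_comp; apply: is_deriveNid.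
have -> : @cosh R = 2^-1 \*: (expR + (expR \o -%R)).
  by apply/funext => y; rewrite /cosh /= mulrC.
by apply: is_derive_eq; rewrite /GRing.scale /= mulrN1 mulrC.
Qed.

Lemma is_derive_ln_cosh (x : R) : is_derive x 1 (@ln R \o @cosh R) (tanh x).
Proof.
apply: is_derive_eq (is_derive1_comp (is_derive1_ln (cosh_gt0 x)) (is_derive_cosh x)) _.
have ex_neq0 : expR x + expR (- x) != 0 by rewrite gt_eqF // addr_gt0 // expR_gt0.
by rewrite /tanh /cosh; field.
Qed.

Lemma is_derive_ln_cosh_affine (a b x : R) :
  is_derive x 1 (fun y => ln (cosh (a * y + b))) (tanh (a * x + b) * a).
Proof.
have affine : is_derive x 1 (fun y => a * y + b) a.
  by apply: is_derive_eq; rewrite addr0; exact: mulr1.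
exact: (@is_derive1_comp R (@ln R \o @cosh R) (fun y => a * y + b) x _ _
          (is_derive_ln_cosh (a * x + b)) affine).
Qed.

End Hyperbolic.

Lemma is_derive_EWn (R : realType) n (w : 'I_n -> R)
    (F : R -> R -> R) (dF : R -> R) (x : R) :
  (forall y, is_derive x 1 (F y) (dF y)) ->
  is_derive x 1 (fun x => EWn w (fun y => F y x)) (EWn w dF).
Proof.
move=> dFy.
have -> : (fun x => EWn w (fun y => F y x)) = n%:R^-1 \*: \sum_(i < n) F (w i).
  by apply/funext => x'; rewrite /EWn fct_sumE /= mulrC.
by apply: is_derive_eq; rewrite /EWn mulrC.
Qed.

Lemma derive1_Gn (R : realType) n (w : 'I_n -> R) (beta h x : R) :
  derive1 (Gn w beta h) x
  = x - EWn w (fun y => tanh (kappa w beta * y * x + h) * (kappa w beta * y)).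
Proof.
have -> : Gn w beta h = (fun x => x ^+ 2 / 2)
    - (fun x => EWn w (fun y => ln (cosh (kappa w beta * y * x + h)))).
  by apply/funext => x'; rewrite /Gn /Gns addr0.
rewrite derive1E; apply: derive_val.
apply: is_deriveB; last by apply: is_derive_EWn => y; exact: is_derive_ln_cosh_affine.
by apply: is_derive_eq; rewrite !scaler0 add0r /GRing.scale /=; field.
Qed.

Lemma psumr_gt0 (R : numDomainType) (I : finType) (F : I -> R) (i0 : I) :
  (forall i, 0 < F i) -> 0 < \sum_i F i.
Proof.
move=> F_gt0; rewrite (bigD1 i0) //= ltr_wpDr ?F_gt0 //.
by apply: sumr_ge0 => i _; exact: ltW.
Qed.

Lemma EW_gt0 (R : realType) n (w : 'I_n -> R) :
  (0 < n)%N -> (forall i, 0 < w i) -> 0 < EW w.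
Proof.
move=> n_gt0 w_gt0; rewrite divr_gt0 ?ltr0n //.
exact: (@psumr_gt0 _ _ (fun i => w i) (Ordinal n_gt0)).
Qed.

Lemma regimeU_beta_gt0 (R : realType) (muW : probability (measurableTypeR R) R)
    n (w : 'I_n -> R) (beta h xs : R) :
  regimeU muW beta h ->
  xs = EWn w (fun y => tanh (kappa w beta * y * xs + h) * (kappa w beta * y)) ->
  (0 < h -> 0 < xs) /\ (h < 0 -> xs < 0) /\ (h = 0 -> xs = 0) ->
  0 < beta.
Proof.
case=> [[beta_ge0 h_neq0] | [_ [beta_gt0 _]]] fixpoint [xs_pos [xs_neg _]] //.
rewrite lt_def beta_ge0 andbT; apply/eqP => beta0.
have xs0 : xs = 0.
  rewrite fixpoint /kappa beta0 mul0r sqrtr0 /EWn big1 ?mul0r // => i _.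
  by rewrite !mul0r mulr0.
by case/orP: (lt_total h_neq0) => [/xs_neg | /xs_pos]; rewrite xs0 ltxx.
Qed.

Section GibbsMeasure.
Variables (R : realType) (n : nat) (w : 'I_n -> R) (beta h : R).

Let hamil := hamil w beta h.
Let condspin := condspin w beta h.

Definition local_field (s : config n) (i : 'I_n) : R :=
  beta * w i / EW w * wmag_i w s i + h.

Lemma Zn_gt0 : 0 < Zn w beta h.
Proof. by apply: (@psumr_gt0 _ (config n) _ [ffun=> true]) => s; exact: expR_gt0. Qed.

Lemma mun_gt0 (s : config n) : 0 < mun w beta h s.
Proof. by rewrite divr_gt0 ?expR_gt0 ?Zn_gt0. Qed.

Lemma sum_setspin (F : 'I_n -> bool -> R) (s : config n) i b :
  \sum_(j < n) F j (setspin s i b j) = F i b + \sum_(j < n | j != i) F j (s j).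
Proof.
rewrite (bigD1 i) //= ffunE eqxx; congr (_ + _).
by apply: eq_bigr => j ji; rewrite ffunE (negbTE ji).
Qed.

Lemma hamil_setspin (s : config n) i :
  exists P, forall b, hamil (setspin s i b) = P + spin R b * local_field s i.
Proof.
set A := \sum_(j < n | j != i) w j * spin R (s j).
exists (beta / (2 * n%:R * EW w) * (A ^+ 2 + w i ^+ 2)
        + h * \sum_(j < n | j != i) spin R (s j)) => b.
have spin_sqr : spin R b ^+ 2 = 1 by case: b; rewrite /spin ?sqrrN expr1n.
rewrite /hamil /Defs.hamil (sum_setspin (fun j b => w j * spin R b)).
rewrite (sum_setspin (fun j b => spin R b)) -/A /local_field /wmag_i -/A.
rewrite sqrrD exprMn spin_sqr.
(* [invfM] holds in any field, so no hypothesis on [n] or [E[W_n]] is needed. *)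
move: (n%:R : R) (EW w) => m E; rewrite !invfM.
by move: m^-1 E^-1 => a e; field.
Qed.

Lemma condspin_setspin (s : config n) i b :
  condspin s i b = expR (spin R b * local_field s i)
                   / (expR (local_field s i) + expR (- local_field s i)).
Proof.
have [P hamilP] := hamil_setspin s i.
rewrite /condspin /Defs.condspin /mun -/hamil !hamilP /spin /= mul1r mulN1r.
move: (local_field s i) => u; rewrite !expRD.
have Z_neq0 : Zn w beta h != 0 by rewrite gt_eqF ?Zn_gt0.
have eP_neq0 : expR P != 0 by rewrite gt_eqF ?expR_gt0.
have eu_neq0 : expR u + expR (- u) != 0 by rewrite gt_eqF // addr_gt0 // expR_gt0.
by field; rewrite Z_neq0 eu_neq0 -mulrDr mulf_neq0.
Qed.

Lemma sum_condspin (s : config n) i : \sum_(b : bool) condspin s i b = 1.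
Proof.
rewrite big_bool /= !condspin_setspin /spin mul1r mulN1r -mulrDl divff //.
by rewrite gt_eqF // addr_gt0 // expR_gt0.
Qed.

Lemma condspin_mean (s : config n) i :
  \sum_(b : bool) condspin s i b * spin R b = tanh (local_field s i).
Proof.
by rewrite big_bool /= !condspin_setspin /spin mul1r mulN1r mulr1 mulrN1 -mulrBl.
Qed.

Hypothesis n_gt0 : (0 < n)%N.

Lemma condexpF_avg (F : config n -> 'I_n -> bool -> R) (s : config n) :
  condexpF w beta h F s
  = (\sum_(i < n) \sum_(b : bool) condspin s i b * F s i b) / n%:R.
Proof.
rewrite /condexpF /jointlaw.
under eq_bigr do under eq_bigr do rewrite -mulrA.
under eq_bigr do rewrite -mulr_sumr.
under [X in _ / X = _]eq_bigr do rewrite -mulr_sumr sum_condspin mulr1.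
rewrite -mulr_sumr sumr_const card_ord.
have n_neq0 : n%:R != 0 :> R by rewrite pnatr_eq0 -lt0n.
have mun_neq0 : mun w beta h s != 0 by rewrite gt_eqF ?mun_gt0.
by field; rewrite n_neq0 mun_neq0.
Qed.

Lemma condexpF_flip (a : 'I_n -> R) (s : config n) :
  condexpF w beta h (fun s i b => a i * (spin R (s i) - spin R b)) s
  = (\sum_(i < n) a i * (spin R (s i) - tanh (local_field s i))) / n%:R.
Proof.
rewrite condexpF_avg; congr (_ / _); apply: eq_bigr => i _.
transitivity (a i * (spin R (s i) * \sum_(b : bool) condspin s i b
                     - \sum_(b : bool) condspin s i b * spin R b)).
  by rewrite !mulr_sumr -sumrB mulr_sumr; apply: eq_bigr => b _; ring.
by rewrite sum_condspin mulr1 condspin_mean.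
Qed.

End GibbsMeasure.

Section Drift.
Variables (R : realType) (n : nat) (w : 'I_n -> R) (beta h xs : R).
Hypothesis n_gt0 : (0 < n)%N.

Let sqrt_n := Num.sqrt (n%:R : R).

Lemma sqrt_n_neq0 : sqrt_n != 0.
Proof. by rewrite gt_eqF // sqrtr_gt0 ltr0n. Qed.

Lemma sqrt_n_sqr : sqrt_n * sqrt_n = n%:R.
Proof. by rewrite -expr2 sqr_sqrtr // ler0n. Qed.

Lemma condexpF_Xn_increment (s : config n) :
  condexpF w beta h (fun s i b => Xn w beta h xs s - Xn' w beta h xs s i b) s
  = lambda R n * (Xn w beta h xs s - cc w beta h xs * tXn w beta h xs s)
    + lambda R n * (R1 w beta h xs s + R2 w beta h xs s).
Proof.
set c := Num.sqrt (chin w beta h xs).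
have -> : (fun s i b => Xn w beta h xs s - Xn' w beta h xs s i b)
          = (fun s i b => (sqrt_n * c)^-1 * (spin R (s i) - spin R b)).
  apply/funext => s'; apply/funext => i; apply/funext => b.
  by rewrite /Xn' opprB addrC subrK mulrC.
rewrite condexpF_flip // -mulr_sumr sumrB /lambda /R1 /R2 /Xn /mag /Mn /EWn /Tn !sumrB.
(* [chi_n] may vanish: [invfM] needs no side condition, and [c^-1] becomes an
   atom for [field]. *)
rewrite /local_field -/sqrt_n -/c !invfM -sqrt_n_sqr; move: c^-1 => c'.
by field; exact: sqrt_n_neq0.
Qed.

Hypotheses (EW_gt0 : 0 < EW w) (beta_gt0 : 0 < beta).

Lemma kappa_sqr : kappa w beta ^+ 2 = beta / EW w.
Proof. by rewrite sqr_sqrtr // divr_ge0 // ltW. Qed.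

Lemma sqrt_EW_beta_kappa : Num.sqrt (EW w / beta) * kappa w beta = 1.
Proof.
rewrite -sqrtrM; last by rewrite divr_ge0 // ltW.
by rewrite -invf_div mulVf ?sqrtr1 // gt_eqF // divr_gt0.
Qed.

Lemma scaled_derive1_Gn (x : R) :
  Num.sqrt (EW w / beta) * derive1 (Gn w beta h) (kappa w beta * x)
  = x - EWn w (fun y => y * tanh (beta * y / EW w * x + h)).
Proof.
rewrite derive1_Gn mulrBr mulrA sqrt_EW_beta_kappa mul1r /EWn mulrA mulr_sumr.
congr (_ - _ / _); apply: eq_bigr => i _.
have -> : kappa w beta * w i * (kappa w beta * x) = beta * w i / EW w * x.
  by rewrite [beta * w i / _]mulrAC -kappa_sqr; ring.
by rewrite mulrCA [Num.sqrt _ * _]mulrA sqrt_EW_beta_kappa mul1r mulrC.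
Qed.

Lemma condexpF_tXn_increment (s : config n) :
  condexpF w beta h (fun s i b => tXn w beta h xs s - tXn' w beta h xs s i b) s
  = lambda R n * (0 * Xn w beta h xs s
                  + 1 / sigma2 w beta h xs * tXn w beta h xs s)
    + lambda R n * (tR1 w beta h xs s + tR2 w beta h xs s).
Proof.
set c := Num.sqrt (tchin w beta h xs).
have -> : (fun s i b => tXn w beta h xs s - tXn' w beta h xs s i b)
          = (fun s i b => w i / (sqrt_n * c) * (spin R (s i) - spin R b)).
  apply/funext => s'; apply/funext => i; apply/funext => b.
  by rewrite /tXn' opprB addrC subrK mulrAC.
rewrite condexpF_flip // /lambda /tR1 /tR2 -[_ * Num.sqrt (EW w / beta) * _]mulrA.
rewrite scaled_derive1_Gn /EWn /local_field.
under eq_bigr do rewrite mulrAC mulrBr.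
under [in RHS]eq_bigr do rewrite mulrBr.
rewrite -mulr_suml !sumrB.
set S_spin := \sum_(i < n) w i * spin R (s i).
set S_local := \sum_(i < n) w i * tanh (beta * w i / EW w * wmag_i w s i + h).
set S_mean := \sum_(i < n) w i * tanh (beta * w i / EW w * wmag w s + h).
rewrite /wmag -/S_spin -/sqrt_n -/c.
move: (1 / sigma2 w beta h xs) => sg.
rewrite -sqrt_n_sqr !invfM; move: c^-1 => c'.
by field; exact: sqrt_n_neq0.
Qed.

End Drift.

Theorem lemma3p1 (R : realType) (muW : probability (measurableTypeR R) R)
  (w : forall n : nat, 'I_n -> R) (hw : weight_regular muW w)
  (beta h : R) (hU : regimeU muW beta h)
  (n : nat) (hn : (0 < n)%N) (xs : R)
  (hfix : xs = EWn (w n) (fun y => tanh (kappa (w n) beta * y * xs + h)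
                                     * (kappa (w n) beta * y)))
  (hsign : (0 < h -> 0 < xs) /\ (h < 0 -> xs < 0) /\ (h = 0 -> xs = 0))
  (s : config n) :
  condexpF (w n) beta h
     (fun s i b => Xn (w n) beta h xs s - Xn' (w n) beta h xs s i b) s
  = lambda R n * (Xn (w n) beta h xs s - cc (w n) beta h xs * tXn (w n) beta h xs s)
    + lambda R n * (R1 (w n) beta h xs s + R2 (w n) beta h xs s)
  /\
  condexpF (w n) beta h
     (fun s i b => tXn (w n) beta h xs s - tXn' (w n) beta h xs s i b) s
  = lambda R n * (0 * Xn (w n) beta h xs s
                + 1 / sigma2 (w n) beta h xs * tXn (w n) beta h xs s)
    + lambda R n * (tR1 (w n) beta h xs s + tR2 (w n) beta h xs s).
Proof.
have EW_pos : 0 < EW (w n) := EW_gt0 hn (hw.1 n).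
have beta_pos : 0 < beta := regimeU_beta_gt0 hU hfix hsign.
split; first exact: condexpF_Xn_increment.
exact: condexpF_tXn_increment.
Qed.
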